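(* Let $\mathcal{A}$ be an arrangement of distinct lines in $\mathbb{P}^2_{\mathbb{C}}$ such that $|\operatorname{mult}(\mathcal{A})\cap H|\le 2$ for every $H\in\mathcal{A}$. Then $\mathcal{A}$ is inductively connected, and hence $\mathcal{R}(I(\mathcal{A}))$ is irreducible.
   Context: $\operatorname{mult}(\mathcal{A})$ is the set of points of $\mathbb{P}^2$ lying on at least three lines of $\mathcal{A}$. An arrangement $\mathcal{A}$ is inductively connected (i.c.) if its lines can be numbered $\mathcal{A}=\{H_1,\dots,H_n\}$ so that, with $\mathcal{A}_t=\{H_1,\dots,H_t\}$, one has $|H_t\cap\operatorname{mult}(\mathcal{A}_t)|\le 2$ for all $t$. Lines are identified with points of $(\mathbb{P}^2)^*$ via their coefficients; the incidence $I(\mathcal{A})$ is the set of triples $\{i,j,k\}$ with $H_i\cap H_j\cap H_k\neq\emptyset$; and $\mathcal{R}(I)=\{(H_1,\dots,H_n)\in((\mathbb{P}^2)^* )^n: H_i\ne H_j\ (i\ne j),\ \det(H_i,H_j,H_k)=0 \text{ iff } \{i,j,k\}\in I\}$ with the Zariski topology. *)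

(* Lines/points of P^2 are represented by nonzero vectors of
   'rV[C]_3 (homogeneous coordinates); two vectors represent the same
   projective point iff they are proportional. *)
From HB Require Import structures.
From mathcomp Require Import all_boot all_order all_algebra all_fingroup.
Set Implicit Arguments. Unset Strict Implicit. Unset Printing Implicit Defensive.
Import Order.TTheory GRing.Theory Num.Theory.
Local Open Scope ring_scope.

Section ArrDefs.
Variable C : fieldType.
Local Notation vec := ('rV[C]_3).

Definition pdistinct (u v : vec) : Prop := ~ exists c : C, v = c *: u.

Definition on_line (h p : vec) : Prop := \sum_(k < 3) h 0 k * p 0 k = 0.

Definition det3 (u v w : vec) : C :=
  \det (\matrix_(r < 3, c < 3) (nth 0 [:: u; v; w] r) 0 c).

Definition in_mult (n : nat) (P : pred 'I_n) (H : 'I_n -> vec) (p : vec) : Prop :=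
  p != 0 /\ exists i j k : 'I_n,
    [/\ i != j, i != k & j != k] /\ [/\ P i, P j & P k] /\
    [/\ on_line (H i) p, on_line (H j) p & on_line (H k) p].

Definition at_most_two_on (h : vec) (S : vec -> Prop) : Prop :=
  ~ exists p1 p2 p3 : vec,
      [/\ on_line h p1, on_line h p2 & on_line h p3] /\ [/\ S p1, S p2 & S p3] /\
      [/\ pdistinct p1 p2, pdistinct p1 p3 & pdistinct p2 p3].

Definition arrangement (n : nat) (H : 'I_n -> vec) : Prop :=
  (forall i, H i != 0) /\ (forall i j, i != j -> pdistinct (H i) (H j)).

(* inductively connected: a numbering H_(s 0), ..., H_(s (n-1)) such that
   |H_(s t) ∩ mult(A_t)| <= 2 with A_t = {H_(s 0),...,H_(s t)} *)
Definition ind_connected (n : nat) (H : 'I_n -> vec) : Prop :=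
  exists s : {perm 'I_n}, forall t : 'I_n,
    at_most_two_on (H (s t)) (in_mult (fun u : 'I_n => (u <= t)%N) (fun u => H (s u))).

Definition incidence (n : nat) (H : 'I_n -> vec) (i j k : 'I_n) : Prop :=
  exists p : vec, p != 0 /\ [/\ on_line (H i) p, on_line (H j) p & on_line (H k) p].

(* realization space R(I), as a (scaling-invariant) set of n-tuples of nonzero
   coefficient vectors, i.e. its cone in ((C^3 \ 0))^n *)
Definition realization (n : nat) (I : 'I_n -> 'I_n -> 'I_n -> Prop)
  (G : 'I_n -> vec) : Prop :=
  (forall i, G i != 0) /\ (forall i j, i != j -> pdistinct (G i) (G j)) /\
  (forall i j k, [/\ i != j, i != k & j != k] ->
     (det3 (G i) (G j) (G k) = 0 <-> I i j k)).

Inductive polyfun (n : nat) : (('I_n -> vec) -> C) -> Prop :=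
  | pf_const (c : C) : polyfun (fun _ => c)
  | pf_coord (i : 'I_n) (k : 'I_3) : polyfun (fun G => G i 0 k)
  | pf_add f g : polyfun f -> polyfun g -> polyfun (fun G => f G + g G)
  | pf_mul f g : polyfun f -> polyfun g -> polyfun (fun G => f G * g G).

(* multihomogeneous polynomial functions (homogeneous in each block of
   coordinates); these define the closed sets of (P^2)^n *)
Definition multihom (n : nat) (f : ('I_n -> vec) -> C) : Prop :=
  polyfun f /\ exists d : 'I_n -> nat, forall (G : 'I_n -> vec) (l : 'I_n -> C),
    f (fun i => l i *: G i) = (\prod_(i < n) l i ^+ d i) * f G.

(* Zariski closed subset of (P^2)^n cut out by a family F of multihomogeneous
   polynomials (membership for tuples of nonzero vectors) *)
Definition zclosed (n : nat) (Z : ('I_n -> vec) -> Prop) : Prop :=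
  exists F : (('I_n -> vec) -> C) -> Prop,
    (forall f, F f -> multihom f) /\
    (forall G, (forall i, G i != 0) -> (Z G <-> forall f, F f -> f G = 0)).

Definition zirreducible (n : nat) (X : ('I_n -> vec) -> Prop) : Prop :=
  (exists G, X G) /\
  forall Z1 Z2, zclosed Z1 -> zclosed Z2 ->
    (forall G, X G -> Z1 G \/ Z2 G) ->
    (forall G, X G -> Z1 G) \/ (forall G, X G -> Z2 G).

End ArrDefs.

(* Numbered as given, the arrangement is already inductively connected, since
   mult(A_t) is contained in mult(A).

   For the irreducibility of R(I(A)), any two realizations G1, G2 are joined by
   a family t |-> Phi(t) of arrangements, polynomial in t, with Phi(0) ~ G1 and
   Phi(1) ~ G2, along which every concurrence of A holds identically. It is
   built line by line: the points where H_k crosses two earlier lines are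
   triple points of A, so there are at most two of them. With two such points,
   Phi_k(t) is the line through the two corresponding moving intersection
   points; with one, a line through the moving point interpolating between the
   end lines; with none, the linear interpolation. All the remaining
   conditions of R(I(A)) are non-vanishing of polynomials in t that hold at
   t = 0, so Phi(t) is a realization for all but finitely many t. If R(I(A))
   were covered by closed sets Z1, Z2 with G1 outside Z1 and G2 outside Z2,
   equations f of Z1 and g of Z2 with f(G1) g(G2) <> 0 would make f g vanish
   along Phi for almost all t, hence identically, although f(Phi(0)) and
   g(Phi(1)) are nonzero. *)

From HB Require Import structures.
From mathcomp Require Import all_boot all_order all_algebra all_fingroup.
From mathcomp Require Import ring.
From Stdlib Require Import Classical FunctionalExtensionality.
Import Order.TTheory GRing.Theory Num.Theory.
Local Open Scope ring_scope.
Set Implicit Arguments. Unset Strict Implicit. Unset Printing Implicit Defensive.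

Definition i0 : 'I_3 := @Ordinal 3 0 isT.
Definition i1 : 'I_3 := @Ordinal 3 1 isT.
Definition i2 : 'I_3 := @Ordinal 3 2 isT.

Lemma ord3P (k : 'I_3) : [\/ k = i0, k = i1 | k = i2].
Proof.
by case: k => [[|[|[|//]]] ?]; [constructor 1|constructor 2|constructor 3]; apply/val_inj.
Qed.

Section Vec3.
Variable F : fieldType.
Local Notation vec := 'rV[F]_3.
Implicit Types (u v w p q : vec).

Lemma row3P u v : u 0 i0 = v 0 i0 -> u 0 i1 = v 0 i1 -> u 0 i2 = v 0 i2 -> u = v.
Proof. by move=> ? ? ?; apply/rowP => k; case: (ord3P k) => ->. Qed.

Definition dot u v : F := \sum_(k < 3) u 0 k * v 0 k.

Lemma on_lineE u v : on_line u v = (dot u v = 0).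
Proof. by []. Qed.

Lemma dotE u v : dot u v = u 0 i0 * v 0 i0 + u 0 i1 * v 0 i1 + u 0 i2 * v 0 i2.
Proof.
rewrite /dot !big_ord_recl big_ord0 addr0 addrA.
by congr (_ * _ + _ * _ + _ * _); apply: congr2 => //; apply/val_inj.
Qed.

Definition cross u v : vec := \row_k
  if k == i0 then u 0 i1 * v 0 i2 - u 0 i2 * v 0 i1
  else if k == i1 then u 0 i2 * v 0 i0 - u 0 i0 * v 0 i2
  else u 0 i0 * v 0 i1 - u 0 i1 * v 0 i0.

Lemma cross0 u v : cross u v 0 i0 = u 0 i1 * v 0 i2 - u 0 i2 * v 0 i1.
Proof. by rewrite mxE. Qed.
Lemma cross1 u v : cross u v 0 i1 = u 0 i2 * v 0 i0 - u 0 i0 * v 0 i2.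
Proof. by rewrite mxE. Qed.
Lemma cross2 u v : cross u v 0 i2 = u 0 i0 * v 0 i1 - u 0 i1 * v 0 i0.
Proof. by rewrite mxE. Qed.

Ltac vec3_simpl := rewrite ?dotE ?(cross0, cross1, cross2) ?mxE /=.
Ltac ord3_canon := repeat match goal with
  | |- context[@fun_of_matrix _ _ 3 _ _ ?k] =>
    lazymatch k with i0 => fail | i1 => fail | i2 => fail | _ =>
      first [ rewrite [k](_ : _ = i0); last exact/val_inj
            | rewrite [k](_ : _ = i1); last exact/val_inj
            | rewrite [k](_ : _ = i2); last exact/val_inj ] end
  end.
Ltac vec3_ring := apply: row3P; vec3_simpl; ring.

Lemma dotC u v : dot u v = dot v u.
Proof. by vec3_simpl; ring. Qed.
Lemma dotZl (a : F) u v : dot (a *: u) v = a * dot u v.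
Proof. by vec3_simpl; ring. Qed.
Lemma dot_crossl u v : dot (cross u v) u = 0.
Proof. by vec3_simpl; ring. Qed.
Lemma dot_crossr u v : dot (cross u v) v = 0.
Proof. by vec3_simpl; ring. Qed.
Lemma dot_delta u k : dot u (delta_mx 0 k) = u 0 k.
Proof. by vec3_simpl; case: (ord3P k) => ->; rewrite /= ?mulr1 ?mulr0 ?addr0 ?add0r. Qed.

Lemma crossv0 u : cross u 0 = 0.
Proof. by vec3_ring. Qed.
Lemma crossvv u : cross u u = 0.
Proof. by vec3_ring. Qed.
Lemma crossZ (a b : F) u v : cross (a *: u) (b *: v) = (a * b) *: cross u v.
Proof. by vec3_ring. Qed.
Lemma cross_crossl p q w : cross (cross p q) w = dot p w *: q - dot q w *: p.
Proof. by vec3_ring. Qed.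
Lemma cross_crossr p q w : cross p (cross q w) = dot p w *: q - dot p q *: w.
Proof. by vec3_ring. Qed.

Lemma det3E u v w : det3 u v w = dot (cross u v) w.
Proof.
rewrite /det3 (expand_det_row _ ord0) !big_ord_recl big_ord0 /cofactor.
rewrite !(expand_det_row _ ord0) !big_ord_recl !big_ord0 /cofactor !det_mx11 !mxE /bump /=.
ord3_canon; vec3_simpl; ring.
Qed.

Lemma det3_rot u v w : det3 u v w = det3 v w u.
Proof. by rewrite !det3E; vec3_simpl; ring. Qed.
Lemma det3Z (a b c : F) u v w : det3 (a *: u) (b *: v) (c *: w) = a * b * c * det3 u v w.
Proof. by rewrite !det3E; vec3_simpl; ring. Qed.
Lemma det3_eq (u v w : vec) : (u == v) || (u == w) || (v == w) -> det3 u v w = 0.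
Proof. by case/orP => [/orP[]|] /eqP ->; rewrite !det3E; vec3_simpl; ring. Qed.

Lemma det3_decomp u v w p :
  det3 u v w *: p = dot u p *: cross v w + dot v p *: cross w u + dot w p *: cross u v.
Proof. by rewrite det3E; vec3_ring. Qed.

Lemma dotZ_eq0 (c : F) p q w : q = c *: p -> q != 0 -> dot q w = 0 -> dot p w = 0.
Proof.
move=> -> cp_neq0 /eqP; rewrite dotZl mulf_eq0 => /orP[/eqP c0|/eqP //].
by move: cp_neq0; rewrite c0 scale0r eqxx.
Qed.

Lemma row3_neq0 u : u != 0 -> exists k, u 0 k != 0.
Proof.
move=> u_neq0; apply: NNPP => no_k; move/eqP: u_neq0; apply; apply/rowP => k.
by rewrite mxE; apply/eqP; apply: contra_notT no_k => ?; exists k.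
Qed.

Lemma cross_eq0_scale u v : u != 0 -> cross u v = 0 -> exists c, v = c *: u.
Proof.
move=> /row3_neq0 [k uk_neq0] uv0; exists (v 0 k / u 0 k).
have := cross_crossr (delta_mx 0 k) u v.
rewrite uv0 crossv0 ![dot (delta_mx _ _) _]dotC !dot_delta => /esym/eqP.
rewrite subr_eq0 => /eqP vu.
by rewrite mulrC -scalerA vu scalerA mulVf ?scale1r.
Qed.

Lemma cross_neq0_pdistinct u v : cross u v != 0 -> pdistinct u v.
Proof.
move=> uv_neq0 [c vE]; move: uv_neq0.
by rewrite vE -[u in cross u]scale1r crossZ crossvv scaler0 eqxx.
Qed.

Lemma pdistinct_cross_neq0 u v : u != 0 -> pdistinct u v -> cross u v != 0.
Proof. by move=> u_neq0 uv_dist; apply/eqP => /(cross_eq0_scale u_neq0). Qed.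

Lemma orthogonal2_cross p q w : dot p w = 0 -> dot q w = 0 -> cross p q != 0 ->
  exists c, w = c *: cross p q.
Proof. by move=> pw qw /cross_eq0_scale; apply; rewrite cross_crossl pw qw !scale0r subrr. Qed.

Lemma orthogonal_cross p w : p != 0 -> dot p w = 0 -> exists v, w = cross p v.
Proof.
move=> /row3_neq0 [k pk_neq0] pw; exists ((p 0 k)^-1 *: cross w (delta_mx 0 k)).
rewrite -[p in cross p]scale1r crossZ mul1r cross_crossr pw scale0r subr0.
by rewrite dot_delta scalerA mulVf ?scale1r.
Qed.

End Vec3.

Section PolynomialFamilies.
Variable C : numFieldType.
Local Notation vec := 'rV[C]_3.

Lemma exists_nonroot (p : {poly C}) : p != 0 -> exists t, ~~ root p t.
Proof.
move=> p_neq0; apply: NNPP => all_roots.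
have nat_roots : all (root p) [seq i%:R | i <- iota 0 (size p)].
  by apply/allP => x _; apply: contra_notT all_roots => ?; exists x.
suff: (size p < size p)%N by rewrite ltnn.
rewrite -[X in (X < _)%N](size_iota 0) -(size_map (fun i => i%:R : C)).
apply: max_poly_roots p_neq0 nat_roots _.
by rewrite map_inj_uniq ?iota_uniq // => i j /eqP; rewrite eqr_nat => /eqP.
Qed.

Definition polyfn (f : C -> C) := exists p : {poly C}, forall t, f t = p.[t].
Definition polycurve (f : C -> vec) := forall k, polyfn (fun t => f t 0 k).

Lemma eq_polyfn f g : f =1 g -> polyfn f -> polyfn g.
Proof. by move=> fg [p fE]; exists p => t; rewrite -fg. Qed.
Lemma polyfn_cst c : polyfn (fun _ => c).
Proof. by exists c%:P => t; rewrite hornerC. Qed.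
Lemma polyfn_id : polyfn id.
Proof. by exists 'X => t; rewrite hornerX. Qed.
Lemma polyfnD f g : polyfn f -> polyfn g -> polyfn (fun t => f t + g t).
Proof. by move=> [p fE] [q gE]; exists (p + q) => t; rewrite hornerD fE gE. Qed.
Lemma polyfnM f g : polyfn f -> polyfn g -> polyfn (fun t => f t * g t).
Proof. by move=> [p fE] [q gE]; exists (p * q) => t; rewrite hornerM fE gE. Qed.
Lemma polyfnB f g : polyfn f -> polyfn g -> polyfn (fun t => f t - g t).
Proof.
move=> pf [q gE]; apply: polyfnD pf _; exists (- q) => t.
by rewrite hornerN gE.
Qed.

Lemma polycurve_cst u : polycurve (fun _ => u).
Proof. by move=> k; apply: polyfn_cst. Qed.
Lemma polycurveD f g : polycurve f -> polycurve g -> polycurve (fun t => f t + g t).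
Proof. by move=> pf pg k; apply: eq_polyfn (polyfnD (pf k) (pg k)) => t; rewrite mxE. Qed.
Lemma polycurveZ (s : C -> C) f : polyfn s -> polycurve f -> polycurve (fun t => s t *: f t).
Proof. by move=> ps pf k; apply: eq_polyfn (polyfnM ps (pf k)) => t; rewrite mxE. Qed.
Lemma polycurve_cross f g : polycurve f -> polycurve g -> polycurve (fun t => cross (f t) (g t)).
Proof.
move=> pf pg k; case: (ord3P k) => ->;
  [apply: eq_polyfn (polyfnB (polyfnM (pf i1) (pg i2)) (polyfnM (pf i2) (pg i1)))
  |apply: eq_polyfn (polyfnB (polyfnM (pf i2) (pg i0)) (polyfnM (pf i0) (pg i2)))
  |apply: eq_polyfn (polyfnB (polyfnM (pf i0) (pg i1)) (polyfnM (pf i1) (pg i0)))];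
  by move=> t; rewrite ?(cross0, cross1, cross2).
Qed.
Lemma polyfn_dot f g : polycurve f -> polycurve g -> polyfn (fun t => dot (f t) (g t)).
Proof.
move=> pf pg; apply: eq_polyfn (polyfnD (polyfnD (polyfnM (pf i0) (pg i0))
  (polyfnM (pf i1) (pg i1))) (polyfnM (pf i2) (pg i2))) => t.
by rewrite dotE.
Qed.
Lemma polyfn_det3 f g h : polycurve f -> polycurve g -> polycurve h ->
  polyfn (fun t => det3 (f t) (g t) (h t)).
Proof.
move=> pf pg ph; apply: eq_polyfn (polyfn_dot (polycurve_cross pf pg) ph) => t.
by rewrite det3E.
Qed.

Lemma polyfun_polyfn n (f : ('I_n -> vec) -> C) (Phi : 'I_n -> C -> vec) :
  polyfun f -> (forall i, polycurve (Phi i)) -> polyfn (fun t => f (fun i => Phi i t)).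
Proof.
move=> pf pPhi; elim: pf => [c|i k|{}f g _ pf _ pg|{}f g _ pf _ pg];
  [exact: polyfn_cst|exact: pPhi|exact: polyfnD|exact: polyfnM].
Qed.

Definition lerp (u v : vec) (t : C) := (1 - t) *: u + t *: v.

Lemma lerp0 u v : lerp u v 0 = u.
Proof. by rewrite /lerp subr0 scale1r scale0r addr0. Qed.
Lemma lerp1 u v : lerp u v 1 = v.
Proof. by rewrite /lerp subrr scale0r add0r scale1r. Qed.
Lemma polycurve_lerp u v : polycurve (lerp u v).
Proof.
apply: polycurveD; apply: polycurveZ (polycurve_cst _).
  exact: polyfnB (polyfn_cst 1) polyfn_id.
exact: polyfn_id.
Qed.

Definition generic (P : C -> Prop) :=
  exists2 h : {poly C}, h != 0 & forall t, ~~ root h t -> P t.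

Lemma generic_of_all (P : C -> Prop) : (forall t, P t) -> generic P.
Proof. by exists 1; rewrite ?oner_eq0. Qed.
Lemma generic_impl (P Q : C -> Prop) : (forall t, P t -> Q t) -> generic P -> generic Q.
Proof. by move=> PQ [h h_neq0 hP]; exists h => // t /hP /PQ. Qed.
Lemma genericI (P Q : C -> Prop) : generic P -> generic Q -> generic (fun t => P t /\ Q t).
Proof.
move=> [h h_neq0 hP] [g g_neq0 gQ]; exists (h * g); first by rewrite mulf_neq0.
by move=> t; rewrite rootM negb_or => /andP[/hP ? /gQ ?].
Qed.
Lemma generic_forall (T : finType) (P : T -> C -> Prop) :
  (forall x, generic (P x)) -> generic (fun t => forall x, P x t).
Proof.
move=> gP; suff: generic (fun t => forall x, x \in enum T -> P x t).
  by apply: generic_impl => t Pt x; apply/Pt; rewrite mem_enum.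
elim: (enum T) => [|x s IHs]; first exact: generic_of_all.
apply: generic_impl (genericI (gP x) IHs) => t [Pxt Pst] y.
by rewrite inE => /orP[/eqP->|/Pst].
Qed.
Lemma generic_exists (P : C -> Prop) : generic P -> exists t, P t.
Proof. by move=> [h /exists_nonroot[t ht] hP]; exists t; apply: hP. Qed.

Lemma generic_neq0 f t0 : polyfn f -> f t0 != 0 -> generic (fun t => f t != 0).
Proof.
move=> [p fE] ft0; exists p => [|t]; last by rewrite fE.
by apply: contraNneq ft0 => p0; rewrite fE p0 horner0.
Qed.
Lemma generic_vec_neq0 f t0 : polycurve f -> f t0 != 0 -> generic (fun t => f t != 0).
Proof.
move=> pf /row3_neq0[k fk]; apply: generic_impl (generic_neq0 (pf k) fk) => t.
by apply: contraNneq => ->; rewrite mxE.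
Qed.

Lemma polyfn_generic_eq0 f : polyfn f -> generic (fun t => f t = 0) -> forall t, f t = 0.
Proof.
move=> [p fE] [h h_neq0 hf]; suff: p * h = 0.
  by move/eqP; rewrite mulf_eq0 (negbTE h_neq0) orbF => /eqP p0 t; rewrite fE p0 horner0.
apply: NNPP => /eqP /exists_nonroot[t]; rewrite rootM negb_or => /andP[+ /hf ft0].
by rewrite rootE -fE ft0 eqxx.
Qed.

End PolynomialFamilies.

Section PolynomialPaths.
Variables (C : numFieldType) (n : nat).
Local Notation vec := 'rV[C]_3.
Local Notation config := ('I_n -> vec).

Definition polynomial_path (G1 G2 : config) (Phi : 'I_n -> C -> vec) :=
  [/\ forall i, polycurve (Phi i),
      exists l : 'I_n -> C, forall i, G1 i = l i *: Phi i 0 &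
      exists m : 'I_n -> C, forall i, G2 i = m i *: Phi i 1].

Lemma multihom_scale_neq0 (f : config -> C) (G : config) (l : 'I_n -> C) :
  multihom f -> f (fun i => l i *: G i) != 0 -> f G != 0.
Proof. by move=> [_ [d ->]]; apply: contraNneq => ->; rewrite mulr0. Qed.

Lemma closed_witness (Z : config -> Prop) (G : config) : zclosed Z ->
  (forall i, G i != 0) -> ~ Z G -> exists f, multihom f /\ f G != 0 /\
    forall G', (forall i, G' i != 0) -> Z G' -> f G' = 0.
Proof.
move=> [Fs [Fs_hom ZE]] G_neq0 ZG.
have [f [Fsf fG]] : exists f, Fs f /\ f G <> 0.
  apply: NNPP => no_f; apply/ZG/(ZE _ G_neq0) => f Fsf.
  by apply: NNPP => fG; apply: no_f; exists f.
exists f; split; first exact: Fs_hom.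
split; first exact/eqP.
by move=> G' G'_neq0 /(ZE _ G'_neq0); apply.
Qed.

Lemma zirreducible_polynomial_paths (X : config -> Prop) :
  (exists G, X G) -> (forall G, X G -> forall i, G i != 0) ->
  (forall G1 G2, X G1 -> X G2 ->
     exists2 Phi, polynomial_path G1 G2 Phi & generic (fun t => X (fun i => Phi i t))) ->
  zirreducible X.
Proof.
move=> X0 X_neq0 X_paths; split => // Z1 Z2 Z1_closed Z2_closed X_cover.
apply: NNPP => /not_or_and[notX_Z1 notX_Z2].
have [G1 nXZ1] := not_all_ex_not _ _ notX_Z1.
have [XG1 Z1G1] := imply_to_and _ _ nXZ1.
have [G2 nXZ2] := not_all_ex_not _ _ notX_Z2.
have [XG2 Z2G2] := imply_to_and _ _ nXZ2.
have [f [f_hom [fG1 fZ1]]] := closed_witness Z1_closed (X_neq0 _ XG1) Z1G1.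
have [g [g_hom [gG2 gZ2]]] := closed_witness Z2_closed (X_neq0 _ XG2) Z2G2.
have [Phi [Phi_poly [l lE] [m mE]] X_Phi] := X_paths _ _ XG1 XG2.
have [f_poly g_poly] :
    polyfn (fun t => f (fun i => Phi i t)) /\ polyfn (fun t => g (fun i => Phi i t)).
  by case: f_hom g_hom => [? _] [? _]; split; apply: polyfun_polyfn.
have fg0 : forall t, f (fun i => Phi i t) * g (fun i => Phi i t) = 0.
  apply: (polyfn_generic_eq0 (polyfnM f_poly g_poly)).
  apply: generic_impl X_Phi => t XPhi; have Phi_neq0 := X_neq0 _ XPhi.
  by case: (X_cover _ XPhi) => [/(fZ1 _ Phi_neq0)|/(gZ2 _ Phi_neq0)] ->; rewrite ?mul0r ?mulr0.
have fPhi0 : f (fun i => Phi i 0) != 0.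
  by apply: (multihom_scale_neq0 (l := l)) => //; rewrite -(functional_extensionality _ _ lE).
have gPhi1 : g (fun i => Phi i 1) != 0.
  by apply: (multihom_scale_neq0 (l := m)) => //; rewrite -(functional_extensionality _ _ mE).
have [t [ft gt]] :=
  generic_exists (genericI (generic_neq0 f_poly fPhi0) (generic_neq0 g_poly gPhi1)).
by move/eqP: (fg0 t); rewrite mulf_eq0 (negbTE ft) (negbTE gt).
Qed.

End PolynomialPaths.

Section Arrangement.
Variables (C : numFieldType) (n : nat) (H : 'I_n -> 'rV[C]_3).
Local Notation vec := 'rV[C]_3.
Hypothesis H_arr : arrangement H.

Definition concurrent (a b c : 'I_n) := det3 (H a) (H b) (H c) = 0.
Definition meet (a b : 'I_n) := cross (H a) (H b).

Lemma meet_neq0 a b : a != b -> meet a b != 0.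
Proof. by case: H_arr => H_neq0 H_dist ab; apply: pdistinct_cross_neq0 (H_dist _ _ ab). Qed.

Lemma concurrent_incidence a b c : a != b -> concurrent a b c <-> incidence H a b c.
Proof.
move=> ab; split=> [abc|[p [p_neq0]]]; last rewrite !on_lineE.
  exists (meet a b); split; first exact: meet_neq0.
  by rewrite !on_lineE; split; rewrite dotC ?dot_crossl ?dot_crossr // -det3E.
move=> [pa pb pc]; have := det3_decomp (H a) (H b) (H c) p.
rewrite pa pb pc !scale0r !addr0 => /eqP.
by rewrite scaler_eq0 (negbTE p_neq0) orbF => /eqP.
Qed.

Definition same_concurrences (V : 'I_n -> vec) :=
  [/\ forall i, V i != 0, forall i j, i != j -> cross (V i) (V j) != 0 &
      forall a b c, det3 (V a) (V b) (V c) = 0 <-> concurrent a b c].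

Lemma realizationP V : realization (incidence H) V <-> same_concurrences V.
Proof.
split=> [[V_neq0 [V_dist V_inc]]|[V_neq0 V_cross V_det]].
  split=> // [i j ij|a b c]; first exact: pdistinct_cross_neq0 (V_dist _ _ ij).
  have [abc_eq|] := boolP ((a == b) || (a == c) || (b == c)).
    by case/orP: abc_eq => [/orP[]|] /eqP ->; rewrite /concurrent !det3_eq // eqxx ?orbT.
  rewrite !negb_or => /andP[/andP[ab ac] bc].
  by rewrite concurrent_incidence //; apply: V_inc.
split=> //; split=> [i j ij|a b c [ab ac bc]]; first exact/cross_neq0_pdistinct/V_cross.
by rewrite -concurrent_incidence.
Qed.

Lemma realization_self : realization (incidence H) H.
Proof.
apply/realizationP; split=> // [i|]; last exact: meet_neq0.
by case: H_arr.
Qed.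

Lemma same_concurrences_scale V W (l : 'I_n -> C) :
  same_concurrences V -> (forall i, V i = l i *: W i) -> same_concurrences W.
Proof.
move=> [V_neq0 V_cross V_det] VE.
have l_neq0 i : l i != 0 by apply: contraNneq (V_neq0 i) => l0; rewrite VE l0 scale0r.
split=> [i|i j ij|a b c].
- by apply: contraNneq (V_neq0 i) => W0; rewrite VE W0 scaler0.
- by apply: contraNneq (V_cross _ _ ij) => W0; rewrite !VE crossZ W0 scaler0.
- rewrite -V_det !VE det3Z; split=> [->|/eqP]; first by rewrite mulr0.
  by rewrite !mulf_eq0 !(negbTE (l_neq0 _)) => /eqP.
Qed.

Lemma meet_not_pdistinct a b x y : x != y -> ~ pdistinct (meet a b) (meet x y) ->
  concurrent a b x /\ concurrent a b y.
Proof.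
move=> xy /NNPP[c xyE]; rewrite /concurrent !det3E.
by split; apply: (dotZ_eq0 xyE (meet_neq0 xy)); rewrite ?dot_crossl ?dot_crossr.
Qed.

Lemma same_concurrences_meets V a b c d e : same_concurrences V ->
  a != b -> c != d -> concurrent a b e -> concurrent c d e -> pdistinct (meet a b) (meet c d) ->
  exists l, V e = l *: cross (cross (V a) (V b)) (cross (V c) (V d)).
Proof.
move=> [_ V_cross V_det] ab cd abe cde abcd.
apply: orthogonal2_cross; rewrite -?det3E; [exact/V_det|exact/V_det|].
apply/eqP => /(cross_eq0_scale (V_cross _ _ ab))[l cdE].
have [/V_det abc /V_det abd] : det3 (V a) (V b) (V c) = 0 /\ det3 (V a) (V b) (V d) = 0.
  by rewrite !det3E; split; apply: (dotZ_eq0 cdE (V_cross _ _ cd));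
    rewrite ?dot_crossl ?dot_crossr.
have [l' abE] : exists l', meet a b = l' *: meet c d.
  by apply: orthogonal2_cross; [rewrite dotC -det3E|rewrite dotC -det3E|exact: meet_neq0].
apply: abcd; exists l'^-1; rewrite abE scalerA mulVf ?scale1r //.
by apply: contraNneq (meet_neq0 ab) => l'0; rewrite abE l'0 scale0r.
Qed.

End Arrangement.

Section Deformation.
Variables (C : numFieldType) (n : nat) (H : 'I_n -> 'rV[C]_3).
Local Notation vec := 'rV[C]_3.
Hypothesis H_arr : arrangement H.
Hypothesis H_mult : forall i, at_most_two_on (H i) (in_mult predT H).
Variables G1 G2 : 'I_n -> vec.
Hypotheses (G1_real : realization (incidence H) G1) (G2_real : realization (incidence H) G2).

Definition deformation (k : nat) (Phi : 'I_n -> C -> vec) :=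
  polynomial_path G1 G2 Phi /\
  forall a b c : 'I_n, (a < k)%N -> (b < k)%N -> (c < k)%N -> concurrent H a b c ->
    forall t, det3 (Phi a t) (Phi b t) (Phi c t) = 0.

Lemma path_ends_same_concurrences Phi : polynomial_path G1 G2 Phi ->
  same_concurrences H (fun i => Phi i 0) /\ same_concurrences H (fun i => Phi i 1).
Proof.
case=> _ [l lE] [m mE]; split.
  exact: same_concurrences_scale ((realizationP H_arr _).1 G1_real) lE.
exact: same_concurrences_scale ((realizationP H_arr _).1 G2_real) mE.
Qed.

Section Extension.
Variables (k : nat) (Phi : 'I_n -> C -> vec) (K : 'I_n).
Hypotheses (Phi_def : deformation k Phi) (K_k : nat_of_ord K = k).

Definition special (a b : 'I_n) := [/\ (a < k)%N, (b < k)%N, a != b & concurrent H a b K].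
Definition moving_meet (a b : 'I_n) (t : C) := cross (Phi a t) (Phi b t).

Definition extension (phi : C -> vec) :=
  [/\ polycurve phi, exists l : C, G1 K = l *: phi 0, exists m : C, G2 K = m *: phi 1 &
      forall a b, special a b -> forall t, det3 (Phi a t) (Phi b t) (phi t) = 0].

Lemma polycurve_Phi i : polycurve (Phi i).
Proof. by case: Phi_def => -[]. Qed.

Lemma polycurve_moving_meet a b : polycurve (moving_meet a b).
Proof. exact: polycurve_cross (polycurve_Phi a) (polycurve_Phi b). Qed.

Lemma Phi_ends : same_concurrences H (fun i => Phi i 0) /\ same_concurrences H (fun i => Phi i 1).
Proof. exact: path_ends_same_concurrences Phi_def.1. Qed.

Lemma lt_neq_K a : (a < k)%N -> a != K.
Proof. by apply: contraTneq => ->; rewrite K_k ltnn. Qed.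

Lemma extensionP (phi : C -> vec) : polycurve phi ->
  (exists l : C, Phi K 0 = l *: phi 0) -> (exists m : C, Phi K 1 = m *: phi 1) ->
  (forall a b, special a b -> forall t, det3 (Phi a t) (Phi b t) (phi t) = 0) ->
  extension phi.
Proof.
case: Phi_def => -[_ [l lE] [m mE]] _ phi_poly [l' l'E] [m' m'E]; split => //.
  by exists (l K * l'); rewrite lE l'E scalerA.
by exists (m K * m'); rewrite mE m'E scalerA.
Qed.

(* For generic t the moving meet is a nonzero point common to the three lines. *)
Lemma det3_moving_meet a b x y (phi : C -> vec) : special a b -> polycurve phi ->
  (forall t, dot (moving_meet a b t) (phi t) = 0) ->
  special x y -> ~ pdistinct (meet H a b) (meet H x y) ->
  forall t, det3 (Phi x t) (Phi y t) (phi t) = 0.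
Proof.
move=> [ak bk ab _] phi_poly phi_perp [xk yk xy _] /(meet_not_pdistinct H_arr xy)[abx aby].
have [[_ Phi0_cross _] _] := Phi_ends.
apply: polyfn_generic_eq0; first exact: polyfn_det3 (polycurve_Phi x) (polycurve_Phi y) phi_poly.
apply: generic_impl (generic_vec_neq0 (polycurve_moving_meet a b) (Phi0_cross _ _ ab)).
move=> t M_neq0; have := det3_decomp (Phi x t) (Phi y t) (phi t) (moving_meet a b t).
rewrite ![dot _ (moving_meet a b t)]dotC phi_perp /moving_meet -!det3E.
rewrite !Phi_def.2 // !scale0r !addr0 => /eqP.
by rewrite scaler_eq0 (negbTE M_neq0) orbF => /eqP.
Qed.

Lemma special_meet_mult a b : special a b ->
  in_mult predT H (meet H a b) /\ on_line (H K) (meet H a b).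
Proof.
move=> [ak bk ab abK]; have on_K : on_line (H K) (meet H a b).
  by rewrite on_lineE dotC -det3E.
split=> //; split; first exact: meet_neq0.
exists a, b, K; split; first by split=> //; apply: lt_neq_K.
by split=> //; split=> //; rewrite on_lineE dotC ?dot_crossl ?dot_crossr.
Qed.

Lemma extension_no_special : ~ (exists a b, special a b) -> extension (lerp (G1 K) (G2 K)).
Proof.
move=> no_special; split; first exact: polycurve_lerp.
- by exists 1; rewrite lerp0 scale1r.
- by exists 1; rewrite lerp1 scale1r.
- by move=> a b sab; case: no_special; exists a, b.
Qed.

Lemma extension_two_meets a b c d : special a b -> special c d ->
  pdistinct (meet H a b) (meet H c d) ->
  extension (fun t => cross (moving_meet a b t) (moving_meet c d t)).
Proof.
move=> sab scd abcd; have [[_ _ ab abK] [_ _ cd cdK]] := (sab, scd).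
have [Phi0 Phi1] := Phi_ends.
have phi_poly := polycurve_cross (polycurve_moving_meet a b) (polycurve_moving_meet c d).
apply: extensionP => //.
- by have [l ?] := same_concurrences_meets H_arr Phi0 ab cd abK cdK abcd; exists l.
- by have [m ?] := same_concurrences_meets H_arr Phi1 ab cd abK cdK abcd; exists m.
move=> x y sxy t; have [ab_mult ab_on] := special_meet_mult sab.
have [cd_mult cd_on] := special_meet_mult scd; have [xy_mult xy_on] := special_meet_mult sxy.
have [xy_ab|ab_xy] := classic (pdistinct (meet H a b) (meet H x y)); last first.
  by apply: det3_moving_meet sab phi_poly _ sxy ab_xy t => s; rewrite dotC dot_crossl.
have [xy_cd|cd_xy] := classic (pdistinct (meet H c d) (meet H x y)); last first.
  by apply: det3_moving_meet scd phi_poly _ sxy cd_xy t => s; rewrite dotC dot_crossr.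
by case: (H_mult (i := K)); exists (meet H a b), (meet H c d), (meet H x y).
Qed.

Lemma extension_one_meet a b : special a b ->
  (forall c d, special c d -> ~ pdistinct (meet H a b) (meet H c d)) ->
  exists phi, extension phi.
Proof.
move=> sab one_meet; have [_ _ ab abK] := sab.
have [[_ Phi0_cross Phi0_det] [_ Phi1_cross Phi1_det]] := Phi_ends.
have [w1 w1E] : exists w, Phi K 0 = cross (moving_meet a b 0) w.
  by apply: orthogonal_cross; [exact: Phi0_cross|rewrite -det3E; exact/Phi0_det].
have [w2 w2E] : exists w, Phi K 1 = cross (moving_meet a b 1) w.
  by apply: orthogonal_cross; [exact: Phi1_cross|rewrite -det3E; exact/Phi1_det].
have phi_poly := polycurve_cross (polycurve_moving_meet a b) (polycurve_lerp w1 w2).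
exists (fun t => cross (moving_meet a b t) (lerp w1 w2 t)); apply: extensionP => //.
- by exists 1; rewrite lerp0 -w1E scale1r.
- by exists 1; rewrite lerp1 -w2E scale1r.
move=> x y sxy; apply: det3_moving_meet sab phi_poly _ sxy (one_meet _ _ sxy) => t.
by rewrite dotC dot_crossl.
Qed.

Lemma extension_exists : exists phi, extension phi.
Proof.
have [[a [b sab]]|no_special] := classic (exists a b, special a b); last first.
  by exists (lerp (G1 K) (G2 K)); apply: extension_no_special.
have [[c [d [scd abcd]]]|one_meet] :=
  classic (exists c d, special c d /\ pdistinct (meet H a b) (meet H c d)).
  by eexists; apply: extension_two_meets sab scd abcd.
apply: extension_one_meet sab _ => c d scd abcd.
by apply: one_meet; exists c, d.
Qed.

End Extension.

Lemma deformation_succ k Phi (K : 'I_n) : deformation k Phi -> nat_of_ord K = k ->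
  exists Phi', deformation k.+1 Phi'.
Proof.
move=> Phi_def K_k; have [phi [phi_poly [lK lKE] [mK mKE] phi_det]] := extension_exists Phi_def K_k.
have [[Phi_poly [l lE] [m mE]] Phi_det] := Phi_def.
pose Phi' (i : 'I_n) := if i == K then phi else Phi i.
have lt_k (a : 'I_n) : (a < k.+1)%N -> a != K -> (a < k)%N.
  move=> + aK; rewrite ltnS leq_eqVlt => /orP[/eqP a_k|//].
  by move: aK; rewrite -val_eqE /= a_k K_k eqxx.
have last_K (a b c : 'I_n) : (a < k.+1)%N -> (b < k.+1)%N -> (c < k.+1)%N -> a != K -> b != K ->
    concurrent H a b c -> forall t, det3 (Phi' a t) (Phi' b t) (Phi' c t) = 0.
  move=> ak bk ck aK bK abc t; rewrite /Phi' (negbTE aK) (negbTE bK).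
  case: ifP => [/eqP cK|/negbT cK]; last by apply: Phi_det; rewrite ?lt_k.
  subst c; have [ab | ab] := eqVneq a b; first by rewrite ab det3_eq ?eqxx.
  by apply: phi_det; split; rewrite ?lt_k.
exists Phi'; split.
  split; first by move=> i; rewrite /Phi'; case: eqP.
  - by exists (fun i => if i == K then lK else l i) => i; rewrite /Phi'; case: eqVneq => [->|].
  - by exists (fun i => if i == K then mK else m i) => i; rewrite /Phi'; case: eqVneq => [->|].
move=> a b c ak bk ck abc t.
have [abc_eq|] := boolP ((a == b) || (a == c) || (b == c)).
  by rewrite det3_eq //; case/orP: abc_eq => [/orP[]|] /eqP ->; rewrite eqxx ?orbT.
rewrite !negb_or => /andP[/andP[ab ac] bc].
have [aK|aK] := eqVneq a K.
  subst a; rewrite det3_rot; apply: last_K => //; try by rewrite eq_sym.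
  by rewrite /concurrent -det3_rot.
have [bK|bK] := eqVneq b K; last exact: last_K.
subst b; rewrite -det3_rot; apply: last_K => //; try by rewrite eq_sym.
by rewrite /concurrent det3_rot.
Qed.

Lemma deformation_exists k : (k <= n)%N -> exists Phi, deformation k Phi.
Proof.
elim: k => [_|k IHk kn].
  exists (fun i => lerp (G1 i) (G2 i)); split=> [|a]; last by rewrite ltn0.
  split=> [i||].
  - exact: polycurve_lerp.
  - by exists (fun=> 1) => i; rewrite lerp0 scale1r.
  - by exists (fun=> 1) => i; rewrite lerp1 scale1r.
have [Phi Phi_def] := IHk (ltnW kn).
exact: deformation_succ Phi_def (erefl (nat_of_ord (Ordinal kn))).
Qed.

Lemma polynomial_path_realization : exists2 Phi, polynomial_path G1 G2 Phi &
  generic (fun t => realization (incidence H) (fun i => Phi i t)).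
Proof.
have [Phi [Phi_path Phi_det]] := deformation_exists (leqnn n).
exists Phi => //; have [Phi_poly _ _] := Phi_path.
have [[Phi0_neq0 Phi0_cross Phi0_det] _] := path_ends_same_concurrences Phi_path.
have gen_neq0 : generic (fun t => forall i, Phi i t != 0).
  by apply: generic_forall => i; apply: generic_vec_neq0 (Phi_poly i) (Phi0_neq0 i).
have gen_cross : generic (fun t => forall ij : 'I_n * 'I_n,
    ij.1 != ij.2 -> cross (Phi ij.1 t) (Phi ij.2 t) != 0).
  apply: generic_forall => -[i j] /=; have [->|ij] := eqVneq i j.
    by apply: generic_of_all.
  have Phi_ij := polycurve_cross (Phi_poly i) (Phi_poly j).
  by apply: generic_impl (generic_vec_neq0 Phi_ij (Phi0_cross _ _ ij)) => t ? _.
have gen_det : generic (fun t => forall abc : 'I_n * 'I_n * 'I_n,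
    det3 (Phi abc.1.1 t) (Phi abc.1.2 t) (Phi abc.2 t) = 0 <-> concurrent H abc.1.1 abc.1.2 abc.2).
  apply: generic_forall => -[[a b] c] /=; have [abc|nabc] := classic (concurrent H a b c).
    by apply: generic_of_all => t; split=> // _; apply: Phi_det.
  have det0_neq0 : det3 (Phi a 0) (Phi b 0) (Phi c 0) != 0 by apply/eqP => /Phi0_det.
  apply: generic_impl (generic_neq0 (polyfn_det3 (Phi_poly a) (Phi_poly b) (Phi_poly c)) det0_neq0).
  by move=> t /eqP det_neq0; split.
apply: generic_impl (genericI gen_neq0 (genericI gen_cross gen_det)) => t [neq0 [crs det]].
apply/(realizationP H_arr); split=> // [i j ij|a b c]; first exact: crs (i, j) ij.
exact: det (a, b, c).
Qed.

End Deformation.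

Section InductiveConnectivity.
Variables (F : fieldType) (n : nat) (H : 'I_n -> 'rV[F]_3).

Lemma in_mult_sub (P Q : pred 'I_n) p : subpred P Q -> in_mult P H p -> in_mult Q H p.
Proof.
move=> PQ [p_neq0 [i [j [k [ijk [[Pi Pj Pk] on_ijk]]]]]].
by split=> //; exists i, j, k; split=> //; split=> //; split; apply: PQ.
Qed.

Lemma at_most_two_on_sub h (S T : 'rV[F]_3 -> Prop) :
  (forall p, S p -> T p) -> at_most_two_on h T -> at_most_two_on h S.
Proof.
move=> ST hT [p1 [p2 [p3 [on_h [[S1 S2 S3] dist]]]]].
by apply: hT; exists p1, p2, p3; split=> //; split=> //; split; apply: ST.
Qed.

Lemma ind_connected_of_mult_two :
  (forall i, at_most_two_on (H i) (in_mult predT H)) -> ind_connected H.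
Proof.
move=> H_mult; exists 1%g => t.
have -> : (fun u => H ((1%g : {perm 'I_n}) u)) = H.
  by apply: functional_extensionality => u; rewrite perm1.
rewrite perm1; apply: at_most_two_on_sub (H_mult t) => p; exact: in_mult_sub.
Qed.

End InductiveConnectivity.

Unset Implicit Arguments.
Set Strict Implicit.

Theorem mainTheorem3 (C : numClosedFieldType) (n : nat) (H : 'I_n -> 'rV[C]_3) :
  arrangement H ->
  (forall i : 'I_n, at_most_two_on (H i) (in_mult predT H)) ->
  ind_connected H /\ zirreducible (C := C) (realization (incidence H)).
Proof.
move=> H_arr H_mult; split; first exact: ind_connected_of_mult_two.
apply: zirreducible_polynomial_paths.
- by exists H; apply: realization_self.
- by move=> G [].
- by move=> G1 G2 G1_real G2_real; apply: polynomial_path_realization.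
Qed.
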